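(* Let $\sigma$ be an involutive non-degenerate quiver-theoretic Yang--Baxter map on a quiver $\mathscr{A}$, and let $E$ be the closure of (the image of) $\mathscr{A}$ under right-lcms in the structure category $\mathscr{C}(\sigma)$ (a Garside family of $\mathscr{C}(\sigma)$). Then $E$ is a perfect Garside family.
   Context: Write $\sigma(x,y)=(x\rightharpoonup y,x\leftharpoonup y)$. A quiver-theoretic Yang--Baxter map is a source/target-preserving map $\sigma$ on composable pairs satisfying the braid relation; involutive: $\sigma^2=\mathrm{id}$; non-degenerate: all $x\rightharpoonup\cdot\colon\mathscr{A}(\mathfrak{t}(x),\Lambda)\to\mathscr{A}(\mathfrak{s}(x),\Lambda)$ and $\cdot\leftharpoonup y\colon\mathscr{A}(\Lambda,\mathfrak{s}(y))\to\mathscr{A}(\Lambda,\mathfrak{t}(y))$ bijective. $\mathscr{C}(\sigma)$ is the category presented by generators $\mathscr{A}$ and relations $x|y\sim(x\rightharpoonup y)|(x\leftharpoonup y)$; it is left-Ore (cancellative, any two elements with same target have a common left-multiple) and admits left-lcms. For a category $\mathscr{C}$ and subfamily $\mathscr{S}$, $\mathscr{S}^\sharp=\mathscr{S}\mathscr{C}^\times\cup\mathscr{C}^\times$ ($\mathscr{C}^\times$ invertible elements). A left-lcm witness on $\mathscr{S}^\sharp$ is a partial map $\tilde\theta$ from $\mathscr{S}^\sharp\times\mathscr{S}^\sharp$ to paths in $\mathscr{S}^\sharp$ such that $\tilde\theta(s,t)$ and $\tilde\theta(t,s)$ are defined iff $s,t$ admit a left-lcm, and then $\tilde\theta(s,t)t=\tilde\theta(t,s)s$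 is a left-lcm of $s,t$; it is short if its values lie in $\mathscr{S}^\sharp$ or are empty. For a left-Ore category admitting left-lcms, a Garside family $\mathscr{S}$ is perfect if there is a short left-lcm witness $\tilde\theta$ on $\mathscr{S}^\sharp$ such that $\tilde\theta(s,t)t\in\mathscr{S}^\sharp$ for all $s,t$ with the same target. *)

From Stdlib Require Import List Relation_Operators.
From mathcomp Require Import all_boot.


Set Implicit Arguments.
Unset Strict Implicit.
Unset Printing Implicit Defensive.

Section YB.
Variables (V A : Type) (src tgt : A -> V) (sigma : A -> A -> A * A).

(** ** Yang--Baxter map axioms.  sigma x y = (x ⇀ y, x ↼ y); only its values
    on composable pairs (tgt x = src y) matter. *)
Definition s12 (w : A * A * A) : A * A * A :=
  let: (a, b, c) := w in ((sigma a b).1, (sigma a b).2, c).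
Definition s23 (w : A * A * A) : A * A * A :=
  let: (a, b, c) := w in (a, (sigma b c).1, (sigma b c).2).

Definition qYB_map : Prop :=
  (forall x y, tgt x = src y ->
     [/\ src (sigma x y).1 = src x,
         tgt (sigma x y).1 = src (sigma x y).2 &
         tgt (sigma x y).2 = tgt y]) /\
  (forall x y z, tgt x = src y -> tgt y = src z ->
     s12 (s23 (s12 (x, y, z))) = s23 (s12 (s23 (x, y, z)))).

Definition involutive_qYB : Prop :=
  forall x y, tgt x = src y -> sigma (sigma x y).1 (sigma x y).2 = (x, y).

Definition nondegenerate_qYB : Prop :=
  (forall x u, src u = src x ->
     exists! y, src y = tgt x /\ (sigma x y).1 = u) /\
  (forall y w, tgt w = tgt y ->
     exists! x, tgt x = src y /\ (sigma x y).2 = w).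

Definition qpath := (V * seq A)%type.
Definition psrc (p : qpath) : V := p.1.
Definition ptgt (p : qpath) : V := last p.1 (map tgt p.2).
Fixpoint valid_from (v : V) (l : seq A) : Prop :=
  match l with
  | [::] => True
  | x :: l' => src x = v /\ valid_from (tgt x) l'
  end.
Definition valid (p : qpath) : Prop := valid_from p.1 p.2.
(* composition in diagrammatic order: p then q (meaningful if ptgt p = psrc q) *)
Definition comp (p q : qpath) : qpath := (p.1, p.2 ++ q.2).
Definition idp (v : V) : qpath := (v, [::]).
Definition arrow_path (x : A) : qpath := (src x, [:: x]).

(** ** The structure category C(sigma): paths modulo the congruence
    generated by x|y ~ (x ⇀ y)|(x ↼ y). *)
Definition ystep (p q : qpath) : Prop :=
  p.1 = q.1 /\ exists l1 l2 x y, tgt x = src y /\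
    p.2 = l1 ++ x :: y :: l2 /\
    q.2 = l1 ++ (sigma x y).1 :: (sigma x y).2 :: l2.
Definition eqv : qpath -> qpath -> Prop := clos_refl_sym_trans qpath ystep.

Definition invertible (p : qpath) : Prop :=
  valid p /\ exists q, [/\ valid q, psrc q = ptgt p, ptgt q = psrc p,
    eqv (comp p q) (idp (psrc p)) & eqv (comp q p) (idp (psrc q))].

Definition ldiv (f g : qpath) : Prop :=
  [/\ valid f, valid g &
   exists h, [/\ valid h, psrc h = ptgt f & eqv (comp f h) g]].
Definition rdiv (s g : qpath) : Prop :=
  [/\ valid s, valid g &
   exists f, [/\ valid f, ptgt f = psrc s & eqv (comp f s) g]].

Definition is_rlcm (f g h : qpath) : Prop :=
  [/\ ldiv f h, ldiv g h & forall h', ldiv f h' -> ldiv g h' -> ldiv h h'].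
Definition is_llcm (s t h : qpath) : Prop :=
  [/\ rdiv s h, rdiv t h & forall h', rdiv s h' -> rdiv t h' -> rdiv h h'].
Definition has_llcm (s t : qpath) : Prop := exists h, is_llcm s t h.

Definition sharp (S : qpath -> Prop) (g : qpath) : Prop :=
  valid g /\
  ((exists s e, [/\ S s, valid s, invertible e, psrc e = ptgt s &
                    eqv (comp s e) g]) \/ invertible g).

Inductive rlcm_closure : qpath -> Prop :=
| rc_gen (x : A) (p : qpath) :
    valid p -> eqv p (arrow_path x) -> rlcm_closure p
| rc_lcm (f g h : qpath) :
    rlcm_closure f -> rlcm_closure g -> is_rlcm f g h -> rlcm_closure h.

Definition greedy (S : qpath -> Prop) (s1 s2 : qpath) : Prop :=
  forall s f, S s -> valid f -> ptgt f = psrc s1 ->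
    ldiv s (comp (comp f s1) s2) -> ldiv s (comp f s1).

Fixpoint pchain (v : V) (ss : seq qpath) (w : V) : Prop :=
  match ss with
  | [::] => v = w
  | s :: ss' => [/\ valid s, psrc s = v & pchain (ptgt s) ss' w]
  end.

Fixpoint greedy_chain (S : qpath -> Prop) (ss : seq qpath) : Prop :=
  match ss with
  | s1 :: ((s2 :: _) as ss') => greedy S s1 s2 /\ greedy_chain S ss'
  | _ => True
  end.

Definition eval_from (v : V) (ss : seq qpath) : qpath :=
  (v, flatten (map snd ss)).

Definition Garside (S : qpath -> Prop) : Prop :=
  forall g, valid g -> exists ss,
    [/\ pchain (psrc g) ss (ptgt g),
        (forall s, List.In s ss -> sharp S s),
        greedy_chain S ss &
        eqv (eval_from (psrc g) ss) g].

Fixpoint seq_eqv (ss uu : seq qpath) : Prop :=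
  match ss, uu with
  | [::], [::] => True
  | s :: ss', t :: uu' => eqv s t /\ seq_eqv ss' uu'
  | _, _ => False
  end.
Definition opt_seq_eqv (o1 o2 : option (seq qpath)) : Prop :=
  match o1, o2 with
  | None, None => True
  | Some ss, Some uu => seq_eqv ss uu
  | _, _ => False
  end.

Definition lmul (ss : seq qpath) (t : qpath) : qpath :=
  (match ss with s0 :: _ => psrc s0 | [::] => psrc t end,
   flatten (map snd ss) ++ t.2).

(* theta is a (partial, via option) map on S^sharp x S^sharp to paths of
   S^sharp, well defined on elements of C(sigma) *)
Definition llcm_witness (S : qpath -> Prop)
    (theta : qpath -> qpath -> option (seq qpath)) : Prop :=
  [/\ (forall s t s' t', sharp S s -> sharp S t -> sharp S s' -> sharp S t' ->
         eqv s s' -> eqv t t' -> opt_seq_eqv (theta s t) (theta s' t')),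
      (forall s t, sharp S s -> sharp S t ->
         (theta s t <> None <-> has_llcm s t)) &
      (forall s t ss uu, sharp S s -> sharp S t ->
         theta s t = Some ss -> theta t s = Some uu ->
         [/\ (exists v, pchain v ss (psrc t)),
             (forall u, List.In u ss -> sharp S u),
             (exists v, pchain v uu (psrc s)),
             (forall u, List.In u uu -> sharp S u) &
             eqv (lmul ss t) (lmul uu s) /\ is_llcm s t (lmul ss t)])].

Definition short_witness (S : qpath -> Prop)
    (theta : qpath -> qpath -> option (seq qpath)) : Prop :=
  forall s t ss, sharp S s -> sharp S t -> theta s t = Some ss ->
    size ss <= 1.

Definition perfect (S : qpath -> Prop) : Prop :=
  exists theta, [/\ llcm_witness S theta, short_witness S theta &
    forall s t ss, sharp S s -> sharp S t -> ptgt s = ptgt t ->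
      theta s t = Some ss -> sharp S (lmul ss t)].

End YB.

(* Send a path x1 x2 ... xn of the quiver to the list
     pi = [x1; x1 ⇀ x2; x1 ⇀ (x2 ⇀ x3); ...].
   The braid relation and involutivity make the multiset pi invariant under the relations of
   C(sigma), and nondegeneracy makes it a bijection between the elements of C(sigma) with a
   given source v and the finite multisets of arrows with source v.  Left divisibility becomes
   multiset inclusion and right-lcms of squarefree elements (pi without repetitions) become
   unions, so E consists of the nonidentity squarefree elements and E^sharp of all of them.
   Peeling off the support of pi as first factor gives a greedy, hence normal, decomposition.
   For perfectness a left-lcm of squarefree elements must be squarefree.  Squarefreeness means
   that no representative contains a pair x y with sigma(x, y) = (x, y); this survives reversal
   of the quiver, which exchanges left and right divisibility, so the reversed right-lcm gives a
   squarefree common left multiple, and right divisors of squarefree elements are squarefree. *)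

From HB Require Import structures.
From Stdlib Require Import Relation_Operators Setoid.
From mathcomp Require Import all_boot zify.
From mathcomp Require boolp.
From Pilot Require Import Defs.

Set Implicit Arguments.
Unset Strict Implicit.
Unset Printing Implicit Defensive.

Section Submultisets.
Variable T : eqType.
Implicit Types s t : seq T.

Definition submset s t := forall a, count_mem a s <= count_mem a t.

Lemma mem_submset s t : submset s t -> {subset s <= t}.
Proof. by move=> sub_st a; rewrite -!has_pred1 !has_count => /leq_trans; apply. Qed.

Lemma submsetP s t : submset s t <-> exists d, perm_eq t (s ++ d).
Proof.
split=> [|[d /permP st] a]; last by rewrite st count_cat leq_addr.
elim: s t => [|a s IH] t sub_st; first by exists t.
have /perm_to_rem t_a := mem_submset sub_st (mem_head a s).
have [d rem_d] : exists d, perm_eq (rem a t) (s ++ d).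
  by apply: IH => b; have := sub_st b; rewrite (permP t_a) /= leq_add2l.
by exists d; rewrite (perm_trans t_a) // perm_cons.
Qed.

Lemma uniq_submset s t : uniq s -> {subset s <= t} -> submset s t.
Proof.
move=> uniq_s sub_st a; rewrite count_uniq_mem //.
by case s_a: (a \in s) => //; rewrite -has_count has_pred1 sub_st.
Qed.

Lemma submset_uniq s t : submset s t -> uniq t -> uniq s.
Proof. by case/submsetP=> d /perm_uniq ->; rewrite cat_uniq => /and3P[]. Qed.

Lemma perm_map_inj_in (U : eqType) (f : T -> U) s t :
  {in s ++ t &, injective f} -> perm_eq (map f s) (map f t) -> perm_eq s t.
Proof.
move=> inj_f /permP st; apply/allP => x st_x /=.
have count_f u : {subset u <= s ++ t} -> count_mem x u = count_mem (f x) (map f u).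
  move=> sub_u; rewrite count_map; apply: eq_in_count => y /sub_u y_st /=.
  by rewrite (inj_in_eq inj_f).
by rewrite !count_f ?st // => y y_in; rewrite mem_cat y_in ?orbT.
Qed.

End Submultisets.

Lemma exists_map_preim (T U : eqType) (f : T -> U) (P : T -> Prop) (s : seq U) :
  {in s, forall u, exists2 x, P x & f x = u} ->
  exists r, {in r, forall x, P x} /\ map f r = s.
Proof.
elim: s => [|u s IH] preim_s; first by exists [::].
have [x Px fx] := preim_s u (mem_head u s).
have [r [Pr fr]] : exists r, {in r, forall x, P x} /\ map f r = s.
  by apply: IH => v s_v; apply: preim_s; rewrite inE s_v orbT.
by exists (x :: r); split=> [y /predU1P[->|/Pr]|] //=; rewrite fx fr.
Qed.

Section Paths.
Variables (V : Type) (A : eqType) (src tgt : A -> V) (sigma : A -> A -> A * A).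
Hypothesis sigmaYB : qYB_map src tgt sigma.

Local Notation qpath := (qpath V A).
Local Notation valid := (valid src tgt).
Local Notation valid_from := (valid_from src tgt).
Local Notation ptgt := (ptgt tgt).
Local Notation ystep := (ystep src tgt sigma).
Local Notation eqv := (eqv src tgt sigma).
Local Notation rdiv := (rdiv src tgt sigma).
Local Notation is_llcm := (is_llcm src tgt sigma).
Local Notation "x ⇀ y" := (sigma x y).1 (at level 40, no associativity).
Local Notation "x ↼ y" := (sigma x y).2 (at level 40, no associativity).

Lemma sigma_typing x y : tgt x = src y ->
  [/\ src (x ⇀ y) = src x, tgt (x ⇀ y) = src (x ↼ y) & tgt (x ↼ y) = tgt y].
Proof. exact: sigmaYB.1. Qed.

Lemma valid_from_cat v l1 l2 :
  valid_from v (l1 ++ l2) <-> valid_from v l1 /\ valid_from (last v (map tgt l1)) l2.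
Proof. by elim: l1 v => [|x l1 IH] v /=; [tauto | rewrite IH; tauto]. Qed.

Lemma valid_comp f h : valid f -> valid h -> psrc h = ptgt f -> valid (comp f h).
Proof.
by move=> vf vh hf; apply/valid_from_cat; split; rewrite // -/(ptgt f) -hf.
Qed.

Lemma ptgt_comp f h : psrc h = ptgt f -> ptgt (comp f h) = ptgt h.
Proof. by move=> hf; rewrite {1}/Defs.ptgt map_cat last_cat -/(ptgt f) -hf. Qed.

Lemma ystep_ptgt p q : ystep p q -> ptgt p = ptgt q.
Proof.
case: p q => [v l] [w l'] [/= <- [l1 [l2 [x [y [xy [-> ->]]]]]]].
rewrite /Defs.ptgt !map_cat !last_cat /=.
by case: l2 => [|z l2] //=; case: (sigma_typing xy) => _ _ ->.
Qed.

Lemma ystep_valid p q : ystep p q -> valid p <-> valid q.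
Proof.
case: p q => [v l] [w l'] [/= <- [l1 [l2 [x [y [xy [-> ->]]]]]]].
rewrite /Defs.valid /= !valid_from_cat /=.
by case: (sigma_typing xy) => -> -> ->; rewrite xy; tauto.
Qed.

Lemma eqv_refl p : eqv p p. Proof. exact: rst_refl. Qed.
Lemma eqv_sym p q : eqv p q -> eqv q p. Proof. exact: rst_sym. Qed.
Lemma eqv_trans q p r : eqv p q -> eqv q r -> eqv p r. Proof. exact: rst_trans. Qed.

Lemma eqv_invariant (U : Type) (f : qpath -> U) :
  (forall p q, ystep p q -> f p = f q) -> forall p q, eqv p q -> f p = f q.
Proof. by move=> Hf p q; elim=> [{}p {}q /Hf|//|{}p {}q _ ->|{}p {}q r _ -> _ ->]. Qed.

Lemma eqv_psrc p q : eqv p q -> psrc p = psrc q.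
Proof. by apply: (eqv_invariant (f := @psrc V A)) => p' q' []. Qed.

Lemma eqv_size p q : eqv p q -> size p.2 = size q.2.
Proof.
apply: (eqv_invariant (f := fun p => size p.2)) => p' q' [_ [l1 [l2 [x [y [_ [-> ->]]]]]]].
by rewrite !size_cat.
Qed.

Lemma eqv_ptgt p q : eqv p q -> ptgt p = ptgt q.
Proof. exact/eqv_invariant/ystep_ptgt. Qed.

Lemma eqv_valid p q : eqv p q -> valid p <-> valid q.
Proof. by elim=> [p' q' /ystep_valid|p'|p' q' _|p1 p2 p3 _ E12 _ E23]; tauto. Qed.

Lemma eqv_compl f p q : eqv p q -> eqv (comp f p) (comp f q).
Proof.
elim=> [p' q' [_ [l1 [l2 [x [y [xy [E1 E2]]]]]]]|p'|p' q' _|p1 p2 p3 _ E12 _].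
- apply: rst_step; split=> //; exists (f.2 ++ l1), l2, x, y.
  by rewrite /comp /= E1 E2 !catA.
- exact: eqv_refl.
- exact: eqv_sym.
- exact: eqv_trans.
Qed.

Lemma lmul1 (u t : qpath) : lmul [:: u] t = comp u t.
Proof. by rewrite /lmul /= cats0. Qed.

Lemma opt_seq_eqv_refl (o : option (seq qpath)) : opt_seq_eqv src tgt sigma o o.
Proof. by case: o => //; elim=> //= p ss IH; split=> //; apply: eqv_refl. Qed.

Lemma rdiv_ptgt s g : rdiv s g -> ptgt s = ptgt g.
Proof. by case=> _ _ [f [_ fs E]]; rewrite -(eqv_ptgt E) ptgt_comp. Qed.

Lemma rdiv_eqvl s s' g : eqv s s' -> rdiv s g -> rdiv s' g.
Proof.
move=> E [vs vg [f [vf fs Efg]]]; split=> //; first exact/(eqv_valid E).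
exists f; split=> //; first by rewrite fs (eqv_psrc E).
exact: eqv_trans (eqv_compl f (eqv_sym E)) Efg.
Qed.

Lemma rdiv_eqvr s g g' : eqv g g' -> rdiv s g -> rdiv s g'.
Proof.
move=> E [vs vg [f [vf fs Efg]]]; split=> //; first exact/(eqv_valid E).
by exists f; split=> //; apply: eqv_trans E.
Qed.

Lemma is_llcm_eqv s t h s' t' h' : eqv s s' -> eqv t t' -> eqv h h' ->
  is_llcm s t h -> is_llcm s' t' h'.
Proof.
move=> Es Et Eh [dsh dth min_h].
split; [exact: rdiv_eqvr Eh (rdiv_eqvl Es dsh) | exact: rdiv_eqvr Eh (rdiv_eqvl Et dth) |].
move=> k /(rdiv_eqvl (eqv_sym Es)) dsk /(rdiv_eqvl (eqv_sym Et)) dtk.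
exact: rdiv_eqvl Eh (min_h k dsk dtk).
Qed.

Lemma is_llcm_sym s t h : is_llcm s t h -> is_llcm t s h.
Proof. by case=> dsh dth min_h; split=> // k dtk dsk; apply: min_h. Qed.

Lemma eqv_llcm s t h h' : is_llcm s t h -> is_llcm s t h' -> eqv h h'.
Proof.
move=> [dsh dth min_h] [dsh' dth' min_h'].
have [_ _ [f [_ fh E]]] := min_h h' dsh' dth'.
have [_ _ [f' [_ _ E']]] := min_h' h dsh dth.
have f0 : f.2 = [::].
  by move: (eqv_size E) (eqv_size E'); rewrite /= !size_cat; case: (f.2) => //= *; lia.
have f1 : f.1 = psrc h by rewrite -fh /Defs.ptgt f0.
apply: eqv_trans _ E; rewrite /comp f0 f1 /psrc -surjective_pairing.
exact: eqv_refl.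
Qed.

End Paths.

Section Cocycle.
Variables (V : Type) (A : eqType) (src tgt : A -> V) (sigma : A -> A -> A * A).
Hypotheses (sigmaYB : qYB_map src tgt sigma)
  (sigma_invol : involutive_qYB src tgt sigma)
  (sigma_nondeg : nondegenerate_qYB src tgt sigma).

Local Notation qpath := (qpath V A).
Local Notation valid := (valid src tgt).
Local Notation valid_from := (valid_from src tgt).
Local Notation ptgt := (ptgt tgt).
Local Notation eqv := (eqv src tgt sigma).
Local Notation ldiv := (ldiv src tgt sigma).
Local Notation is_rlcm := (is_rlcm src tgt sigma).
Local Notation "x ⇀ y" := (sigma x y).1 (at level 40, no associativity).
Local Notation "x ↼ y" := (sigma x y).2 (at level 40, no associativity).
Local Notation idp := (@idp V A).

Fixpoint pi (l : seq A) : seq A :=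
  if l is x :: l' then x :: map (fun y => x ⇀ y) (pi l') else [::].

Definition act (l : seq A) (y : A) : A := foldr (fun x z => x ⇀ z) y l.

Lemma size_pi l : size (pi l) = size l.
Proof. by elim: l => //= x l <-; rewrite size_map. Qed.

Lemma pi_cat l1 l2 : pi (l1 ++ l2) = pi l1 ++ map (act l1) (pi l2).
Proof.
by elim: l1 => [|x l1 IH] /=; rewrite ?map_id // IH map_cat -map_comp.
Qed.

Lemma act_cat l1 l2 y : act (l1 ++ l2) y = act l1 (act l2 y).
Proof. exact: foldr_cat. Qed.

Lemma src_pi v l : valid_from v l -> {in pi l, forall a, src a = v}.
Proof.
elim: l v => [|x l IH] v //= [<- vl] a /predU1P[-> //|/mapP[b /(IH _ vl) sb ->]].
by case: (sigma_typing sigmaYB (esym sb)).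
Qed.

Lemma lact_surj x u : src u = src x -> exists2 y, src y = tgt x & x ⇀ y = u.
Proof. by case/(sigma_nondeg.1 x u) => y [[sy xy] _]; exists y. Qed.

Lemma lact_inj x y y' : src y = tgt x -> src y' = tgt x -> x ⇀ y = x ⇀ y' -> y = y'.
Proof.
move=> sy sy' xy; have [sxy _ _] := sigma_typing sigmaYB (esym sy).
have [z [_ uniq_z]] := sigma_nondeg.1 x (x ⇀ y) sxy.
by rewrite -(uniq_z y (conj sy erefl)) (uniq_z y' (conj sy' (esym xy))).
Qed.

Lemma act_surj v l u : valid_from v l -> src u = v ->
  exists2 y, src y = last v (map tgt l) & act l y = u.
Proof.
elim: l v u => [|x l IH] v u /=; first by exists u.
case=> sx vl su; have [y0 sy0 <-] := lact_surj (etrans su (esym sx)).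
by have [y sy <-] := IH _ _ vl sy0; exists y.
Qed.

Lemma lact_braid x y z : tgt x = src y -> tgt y = src z ->
  (x ⇀ y) ⇀ ((x ↼ y) ⇀ z) = x ⇀ (y ⇀ z).
Proof. by move=> xy yz; move/(congr1 (fun w => w.1.1)): (sigmaYB.2 x y z xy yz). Qed.

Lemma fixed_pair x y : tgt x = src y -> x ⇀ y = x -> sigma x y = (x, y).
Proof.
move=> xy xyx; have [_ txy _] := sigma_typing sigmaYB xy.
have /= x_y' := congr1 fst (sigma_invol xy); rewrite xyx in x_y' txy.
have yx : x ↼ y = y by apply: lact_inj (esym txy) (esym xy) _; rewrite x_y' xyx.
by rewrite [sigma x y]surjective_pairing xyx yx.
Qed.

Lemma perm_pi_ystep p q : ystep src tgt sigma p q -> valid p -> perm_eq (pi p.2) (pi q.2).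
Proof.
case: p q => [v l] [w l'] [/= _ [l1 [l2 [x [y [xy [-> ->]]]]]]].
rewrite /Defs.valid /= valid_from_cat /= => -[_ [_ [_ vl2]]].
rewrite !pi_cat perm_cat2l; apply: perm_map => /=; rewrite (sigma_invol xy) /=.
have -> : map (fun z => (x ⇀ y) ⇀ z) (map (fun z => (x ↼ y) ⇀ z) (pi l2))
        = map (fun z => x ⇀ z) (map (fun z => y ⇀ z) (pi l2)).
  by rewrite -!map_comp; apply/eq_in_map => z /(src_pi vl2) yz; exact: lact_braid.
exact: (permEl (perm_catCA [:: x] [:: x ⇀ y] _)).
Qed.

Lemma perm_pi_eqv p q : eqv p q -> valid p -> perm_eq (pi p.2) (pi q.2).
Proof.
elim=> [p' q' /perm_pi_ystep //|//|p' q' E IH vq|p1 p2 p3 E12 IH12 _ IH23 v1].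
  by rewrite perm_sym IH //; apply/(eqv_valid sigmaYB E).
by rewrite (perm_trans (IH12 v1)) // IH23 //; apply/(eqv_valid sigmaYB E12).
Qed.

Lemma eqv_cons_of_mem_pi v l a : valid_from v l -> a \in pi l ->
  exists l', eqv (v, l) (v, a :: l').
Proof.
elim: l v a => [|x l IH] v a //= [sx vl] /predU1P[->|/mapP[b b_l ->]].
  by exists l; apply: eqv_refl.
have [r Er] := IH _ _ vl b_l; exists (x ↼ b :: r).
apply: eqv_trans (eqv_compl (v, [:: x]) Er) _.
by apply: rst_step; split=> //; exists [::], r, x, b; rewrite (src_pi vl b_l).
Qed.

Lemma eqv_of_perm_pi v l l' : valid_from v l -> valid_from v l' ->
  perm_eq (pi l) (pi l') -> eqv (v, l) (v, l').
Proof.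
elim: l v l' => [|x m IH] v l' vl vl' pll'.
  by case: l' vl' pll' => [_ _|? ? _ /perm_size //]; apply: eqv_refl.
have [m' E'] : exists m', eqv (v, l') (v, x :: m').
  by apply: eqv_cons_of_mem_pi vl' _; rewrite -(perm_mem pll') mem_head.
have [_ vm'] : valid (v, x :: m') by apply/(eqv_valid sigmaYB E').
case: vl => _ vm; apply: eqv_trans (eqv_sym E').
suff /(eqv_compl (v, [:: x])) : eqv (tgt x, m) (tgt x, m') by [].
apply: (IH _ _ vm vm').
have := perm_trans pll' (perm_pi_eqv E' vl'); rewrite /= perm_cons.
apply: perm_map_inj_in => y z; rewrite !mem_cat.
by move=> /orP[/(src_pi vm)|/(src_pi vm')] sy /orP[/(src_pi vm)|/(src_pi vm')] sz;
  apply: lact_inj.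
Qed.

Lemma exists_pi_perm v M : {in M, forall a, src a = v} ->
  exists2 l, valid_from v l & perm_eq (pi l) M.
Proof.
have [n] := ubnP (size M); elim: n M v => // n IH [|a M] v /= size_M srcM.
  by exists [::].
have sa := srcM a (mem_head a M).
have [N [srcN NM]] : exists N, {in N, forall y, src y = tgt a} /\ map (fun y => a ⇀ y) N = M.
  apply: exists_map_preim => u u_M; apply: lact_surj.
  by rewrite sa; apply: srcM; rewrite inE u_M orbT.
have [|l vl pl] := IH N (tgt a) _ srcN; first by rewrite -NM size_map in size_M.
by exists (a :: l); rewrite /= -?NM ?perm_cons ?perm_map.
Qed.

Lemma ldivP f g :
  ldiv f g <-> [/\ valid f, valid g, psrc f = psrc g & submset (pi f.2) (pi g.2)].
Proof.
split=> [[vf vg [h [vh hf E]]]|[vf vg fg /submsetP[d gd]]].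
  split=> //; first exact: eqv_psrc E.
  apply/submsetP; exists (map (act f.2) (pi h.2)).
  by rewrite -pi_cat perm_sym; apply: perm_pi_eqv E (valid_comp vf vh hf).
have src_d : {in d, forall a, src a = psrc f}.
  by move=> a d_a; rewrite fg; apply: (src_pi vg); rewrite (perm_mem gd) mem_cat d_a orbT.
have [N [srcN Nd]] : exists N, {in N, forall y, src y = ptgt f} /\ map (act f.2) N = d.
  by apply: exists_map_preim => u /src_d; apply: act_surj vf.
have [l vl lN] := exists_pi_perm srcN.
split=> //; exists (ptgt f, l); split=> //.
have vfl : valid_from f.1 (f.2 ++ l) := valid_comp (h := (ptgt f, l)) vf vl erefl.
case: g vg fg gd => w m /= vg fw gd; subst w; apply: eqv_of_perm_pi vfl vg _.
rewrite pi_cat perm_sym; apply: perm_trans gd _.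
by rewrite perm_cat2l -Nd perm_map // perm_sym.
Qed.

Definition squarefree (p : qpath) : bool := uniq (pi p.2).

Lemma squarefree_eqv p q : eqv p q -> valid p -> squarefree p = squarefree q.
Proof. by move=> E vp; apply/perm_uniq/perm_pi_eqv. Qed.

Lemma is_rlcm_undup f g h : valid f -> valid g -> valid h ->
  psrc f = psrc h -> psrc g = psrc h -> squarefree f -> squarefree g ->
  perm_eq (pi h.2) (undup (pi f.2 ++ pi g.2)) -> is_rlcm f g h.
Proof.
move=> vf vg vh fh gh sf sg ph.
have mem_h a : (a \in pi h.2) = (a \in pi f.2) || (a \in pi g.2).
  by rewrite (perm_mem ph) mem_undup mem_cat.
have uh : uniq (pi h.2) by rewrite (perm_uniq ph) undup_uniq.
split; try by apply/ldivP; split=> //; apply: uniq_submset => // a a_in;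
  rewrite mem_h a_in ?orbT.
move=> h' /ldivP[_ vh' fh' sub_f] /ldivP[_ _ _ sub_g]; apply/ldivP; split=> //.
  by rewrite -fh -fh'.
apply: uniq_submset => // a; rewrite mem_h.
by case/orP=> [/(mem_submset sub_f)|/(mem_submset sub_g)].
Qed.

Lemma exists_squarefree_rlcm f g : valid f -> valid g -> psrc f = psrc g ->
  squarefree f -> squarefree g -> exists2 m, is_rlcm f g m & squarefree m.
Proof.
move=> vf vg fg sf sg.
have src_fg : {in undup (pi f.2 ++ pi g.2), forall a, src a = psrc f}.
  move=> a; rewrite mem_undup mem_cat => /orP[/(src_pi vf) -> // | /(src_pi vg) ->].
  by rewrite fg.
have [l vl pl] := exists_pi_perm src_fg.
exists (psrc f, l); last by rewrite /squarefree (perm_uniq pl) undup_uniq.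
exact: is_rlcm_undup.
Qed.

Lemma rlcm_closure_squarefree p :
  rlcm_closure src tgt sigma p -> valid p /\ squarefree p.
Proof.
elim=> [x q vq E | f g h _ [vf sf] _ [vg sg] [ldf ldg min_h]].
  by rewrite /squarefree (perm_uniq (perm_pi_eqv E vq)).
have /ldivP[_ vh fh _] := ldf; have /ldivP[_ _ gh _] := ldg.
have [m [ldfm ldgm _] sm] := exists_squarefree_rlcm vf vg (etrans fh (esym gh)) sf sg.
have /ldivP[_ _ _ hm] := min_h m ldfm ldgm.
by split=> //; apply: submset_uniq hm sm.
Qed.

Lemma squarefree_rlcm_closure v l : valid (v, l) -> squarefree (v, l) -> l != [::] ->
  rlcm_closure src tgt sigma (v, l).
Proof.
have [n] := ubnP (size l); elim: n v l => // n IH v [//|x l] size_l [sx vl] sl _.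
have vx : valid (v, [:: x]) by [].
have [-> | l0] := eqVneq l [::].
  by apply: (rc_gen (x := x)) => //; rewrite /arrow_path sx; apply: eqv_refl.
move: sl; rewrite /squarefree /= => /andP[xR uR].
have srcR : {in map (fun y => x ⇀ y) (pi l), forall a, src a = v}.
  by move=> a a_R; apply: (src_pi (l := x :: l)) => //; rewrite inE a_R orbT.
have [l2 vl2 pl2] := exists_pi_perm srcR.
have size_l2 : size l2 = size l by rewrite -size_pi (perm_size pl2) size_map size_pi.
apply: (rc_lcm (f := (v, [:: x])) (g := (v, l2))).
- by apply: (rc_gen (x := x)) => //; rewrite /arrow_path sx; apply: eqv_refl.
- apply: IH => //; first by rewrite size_l2.
    by rewrite /squarefree (perm_uniq pl2).
  by rewrite -size_eq0 size_l2 size_eq0.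
- apply: is_rlcm_undup => //; rewrite /squarefree ?(perm_uniq pl2) //.
  apply: uniq_perm => [||a]; [by rewrite /= xR | exact: undup_uniq |].
  by rewrite mem_undup !inE (perm_mem pl2).
Qed.

Definition fixed_pair_rep (p : qpath) : Prop := exists l1 l2 x y,
  [/\ eqv p (psrc p, l1 ++ x :: y :: l2), tgt x = src y & sigma x y = (x, y)].

Lemma squarefreePn p : valid p -> reflect (fixed_pair_rep p) (~~ squarefree p).
Proof.
move=> vp; apply: (iffP idP) => [|[l1 [l2 [x [y [E xy fxy]]]]]]; last first.
  rewrite /squarefree (perm_uniq (perm_pi_eqv E vp)) pi_cat cat_uniq /= fxy /=.
  by rewrite inE eqxx !andbF.
case: p vp => v l; rewrite /squarefree /=.
elim: l v => [|x l IH] v //= [sx vl].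
have inj_x : {in pi l &, injective (fun y => x ⇀ y)}.
  by move=> y z /(src_pi vl) sy /(src_pi vl); apply: lact_inj.
rewrite negb_and negbK map_inj_in_uniq //.
case/orP=> [/mapP[b b_l xb] | /(IH _ vl)[l1 [l2 [y [z [E yz fyz]]]]]].
  have [r Er] := eqv_cons_of_mem_pi vl b_l; have xb' := esym (src_pi vl b_l).
  exists [::], r, x, b; split=> //; last exact: fixed_pair.
  exact: (eqv_compl (v, [:: x]) Er).
by exists (x :: l1), l2, y, z; split=> //; apply: (eqv_compl (v, [:: x]) E).
Qed.

Local Notation S := (rlcm_closure src tgt sigma).

Lemma greedy_of_support s1 s2 : valid s1 ->
  {subset map (act s1.2) (pi s2.2) <= pi s1.2} -> greedy src tgt sigma S s1 s2.
Proof.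
move=> vs1 sub_s12 s f /rlcm_closure_squarefree[vs ss] vf fs1.
case/ldivP=> _ _ sf sub; apply/ldivP; split=> //; first exact: valid_comp.
apply: uniq_submset ss _ => a /(mem_submset sub).
rewrite /comp /= pi_cat mem_cat => /orP[// | /mapP[b b_s2 ->]].
by rewrite pi_cat act_cat mem_cat map_f ?orbT // sub_s12 // map_f.
Qed.

Lemma exists_support_ldiv v l : valid_from v l ->
  exists2 l1, ldiv (v, l1) (v, l) & perm_eq (pi l1) (undup (pi l)).
Proof.
move=> vl; have [|l1 vl1 pl1] := exists_pi_perm (M := undup (pi l)) (v := v).
  by move=> a; rewrite mem_undup; apply: src_pi.
exists l1 => //; apply/ldivP; split=> //; apply: uniq_submset.
  by rewrite (perm_uniq pl1) undup_uniq.
by move=> a; rewrite (perm_mem pl1) mem_undup.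
Qed.

Lemma exists_greedy_decomposition g : valid g -> exists ss,
  [/\ pchain src tgt (psrc g) ss (ptgt g),
      forall s, List.In s ss -> valid s /\ squarefree s,
      greedy_chain src tgt sigma S ss &
      eqv (eval_from (psrc g) ss) g].
Proof.
case: g => v l; have [n] := ubnP (size l); elim: n v l => // n IH v l size_l vl.
have [-> | l0] := eqVneq l [::]; first by exists [::]; split=> //; apply: eqv_refl.
have [l1 [vl1 _ [[w m] [vm /= l1w E]]] pl1] := exists_support_ldiv vl.
have pi_l1 : pi l1 =i pi l by move=> a; rewrite (perm_mem pl1) mem_undup.
have vl1m : valid (v, l1 ++ m) by apply/(eqv_valid sigmaYB E).
have l1_0 : 0 < size l1.
  case: l l0 pi_l1 {size_l vl vl1 E vl1m pl1} => [//|x l] _ /(_ x).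
  by rewrite -size_pi /= mem_head; case: (pi l1).
have [|ss [chain sqf greedy_ss Ess]] := IH w m _ vm.
  by move: (eqv_size E) size_l l1_0; rewrite /= size_cat; lia.
exists ((v, l1) :: ss); split.
- split=> //; rewrite -l1w -(eqv_ptgt sigmaYB E) ptgt_comp //.
- move=> s /= [<- | /sqf //]; split=> //.
  by rewrite /squarefree (perm_uniq pl1) undup_uniq.
- case: ss chain {sqf} greedy_ss Ess => [//|s2 ss] /= [_ _ _] gss Ess; split=> //.
  apply: greedy_of_support => // a /mapP[b b_s2 ->]; rewrite pi_l1.
  have b_m : b \in pi m.
    have /(eqv_valid sigmaYB Ess) vss := vm.
    by rewrite -(perm_mem (perm_pi_eqv Ess vss)) /= pi_cat mem_cat b_s2.
  by rewrite -(perm_mem (perm_pi_eqv E vl1m)) /= pi_cat mem_cat map_f ?orbT.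
- exact: eqv_trans (eqv_compl (v, l1) Ess) E.
Qed.

Lemma invertible_nil e : invertible src tgt sigma e -> e.2 = [::].
Proof. by case=> _ [q [_ _ _ /eqv_size]]; rewrite /comp size_cat; case: (e.2). Qed.

Lemma idp_invertible v : invertible src tgt sigma (idp v).
Proof. by split=> //; exists (idp v); split=> //; apply: eqv_refl. Qed.

Lemma sharp_squarefree g : sharp src tgt sigma S g <-> valid g /\ squarefree g.
Proof.
split=> [[vg [[s [e [/rlcm_closure_squarefree[vs ss] _ /invertible_nil e0 _ E]]]
              | /invertible_nil g0]] | [vg sg]].
- split=> //; rewrite -(squarefree_eqv E); last by apply/(eqv_valid sigmaYB E).
  by rewrite /squarefree /comp /= e0 cats0.
- by rewrite /squarefree g0.
split=> //; have [g0 | g0] := eqVneq g.2 [::].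
  by right; case: g vg g0 {sg} => v l vg /= ->; exact: idp_invertible.
left; exists g, (idp (ptgt g)); split=> //.
- by case: g vg sg g0 => v l; apply: squarefree_rlcm_closure.
- exact: idp_invertible.
- by rewrite /comp /= cats0; case: g {vg sg g0} => v l; apply: eqv_refl.
Qed.

Theorem rlcm_closure_Garside : Garside src tgt sigma S.
Proof.
move=> g vg; have [ss [chain sqf greedy_ss E]] := exists_greedy_decomposition vg.
by exists ss; split=> // s /sqf; rewrite -sharp_squarefree.
Qed.

End Cocycle.

Definition dual_sigma (A : Type) (sigma : A -> A -> A * A) : A -> A -> A * A :=
  fun y x => ((sigma x y).2, (sigma x y).1).

Lemma dual_sigmaK (A : Type) (sigma : A -> A -> A * A) :
  dual_sigma (dual_sigma sigma) = sigma.
Proof.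
by apply: boolp.funext => x; apply: boolp.funext => y; rewrite /dual_sigma -surjective_pairing.
Qed.

Definition rev_path (V A : Type) (tgt : A -> V) (p : qpath V A) : qpath V A :=
  (ptgt tgt p, rev p.2).

Section Duality.
Variables (V : Type) (A : eqType) (src tgt : A -> V) (sigma : A -> A -> A * A).
Hypotheses (sigmaYB : qYB_map src tgt sigma)
  (sigma_invol : involutive_qYB src tgt sigma)
  (sigma_nondeg : nondegenerate_qYB src tgt sigma).

Local Notation sigma' := (dual_sigma sigma).

Lemma qYB_map_dual : qYB_map tgt src sigma'.
Proof.
have [typing braid] := sigmaYB; split=> [x y xy | x y z xy yz].
  by case: (typing y x (esym xy)).
(* Reversing triples exchanges [s12]/[s23] for [sigma'] with [s23]/[s12] for [sigma]. *)
move: (braid z y x (esym yz) (esym xy)).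
by move/(congr1 (fun w => let: (a, b, c) := w in (c, b, a))).
Qed.

Lemma involutive_dual : involutive_qYB tgt src sigma'.
Proof. by move=> x y xy; rewrite /dual_sigma /= (sigma_invol (esym xy)). Qed.

Lemma nondegenerate_dual : nondegenerate_qYB tgt src sigma'.
Proof.
by case: sigma_nondeg => left_nd right_nd; split=> [x u | y w]; [apply: right_nd | apply: left_nd].
Qed.

Lemma valid_from_rev v l : valid_from src tgt v l ->
  valid_from tgt src (last v (map tgt l)) (rev l) /\
  last (last v (map tgt l)) (map src (rev l)) = v.
Proof.
elim: l v => [|x l IH] v //= [sx vl]; have [vl' last_l] := IH _ vl.
by rewrite rev_cons -cats1 valid_from_cat map_cat last_cat last_l.
Qed.

Lemma valid_rev_path p : valid src tgt p -> valid tgt src (rev_path tgt p).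
Proof. by case/valid_from_rev. Qed.

Lemma rev_pathK p : valid src tgt p -> rev_path src (rev_path tgt p) = p.
Proof. by case: p => v l /valid_from_rev[_]; rewrite /rev_path /Defs.ptgt revK => ->. Qed.

Lemma rev_cat_pair (l1 l2 : seq A) x y :
  rev (l1 ++ x :: y :: l2) = rev l2 ++ y :: x :: rev l1.
Proof. by rewrite rev_cat !rev_cons -!cats1 -!catA. Qed.

Lemma eqv_rev_path p q :
  eqv src tgt sigma p q -> eqv tgt src sigma' (rev_path tgt p) (rev_path tgt q).
Proof.
elim=> [{}p {}q st|{}p|{}p {}q _|{}p q' {}q _ E1 _ E2]; last first.
- exact: eqv_trans E2.
- exact: eqv_sym.
- exact: eqv_refl.
apply: rst_step; split; first exact: ystep_ptgt st.
case: st => _ [l1 [l2 [x [y [xy [E1 E2]]]]]].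
by exists (rev l2), (rev l1), y, x; rewrite /rev_path /= E1 E2 !rev_cat_pair.
Qed.

Lemma fixed_pair_rep_rev p : fixed_pair_rep src tgt sigma p ->
  fixed_pair_rep tgt src sigma' (rev_path tgt p).
Proof.
case=> l1 [l2 [x [y [E xy fxy]]]]; exists (rev l2), (rev l1), y, x; split=> //.
  by have := eqv_rev_path E; rewrite /rev_path -(eqv_ptgt sigmaYB E) rev_cat_pair.
by rewrite /dual_sigma fxy.
Qed.

Lemma ldiv_rev_path p m : ldiv src tgt sigma p m ->
  rdiv tgt src sigma' (rev_path tgt p) (rev_path tgt m).
Proof.
case=> vp vm [h [vh hp E]]; split; try exact: valid_rev_path.
exists (rev_path tgt h); split; first exact: valid_rev_path.
  by rewrite /Defs.ptgt (valid_from_rev vh).2.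
by have := eqv_rev_path E; rewrite /rev_path ptgt_comp // rev_cat.
Qed.

End Duality.

Section Perfect.
Variables (V : Type) (A : eqType) (src tgt : A -> V) (sigma : A -> A -> A * A).
Hypotheses (sigmaYB : qYB_map src tgt sigma)
  (sigma_invol : involutive_qYB src tgt sigma)
  (sigma_nondeg : nondegenerate_qYB src tgt sigma).

Local Notation qpath := (qpath V A).
Local Notation valid := (valid src tgt).
Local Notation ptgt := (ptgt tgt).
Local Notation eqv := (eqv src tgt sigma).
Local Notation is_llcm := (is_llcm src tgt sigma).
Local Notation S := (rlcm_closure src tgt sigma).
Local Notation sharp := (sharp src tgt sigma S).
Local Notation sigma' := (dual_sigma sigma).
Local Notation sigmaYB' := (qYB_map_dual sigmaYB).
Local Notation sigma_invol' := (involutive_dual sigma_invol).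
Local Notation sigma_nondeg' := (nondegenerate_dual sigma_nondeg).
Local Notation sharpE := (sharp_squarefree sigmaYB sigma_invol sigma_nondeg).

Lemma squarefree_rev_path p : valid p ->
  squarefree sigma' (rev_path tgt p) = squarefree sigma p.
Proof.
move=> vp; have vp' := valid_rev_path vp; apply/idP/idP; apply: contraTT.
  move/(squarefreePn sigmaYB sigma_invol sigma_nondeg vp)/(fixed_pair_rep_rev sigmaYB).
  by move/(squarefreePn sigmaYB' sigma_invol' sigma_nondeg' vp').
move/(squarefreePn sigmaYB' sigma_invol' sigma_nondeg' vp')/(fixed_pair_rep_rev sigmaYB').
rewrite dual_sigmaK rev_pathK //.
by move/(squarefreePn sigmaYB sigma_invol sigma_nondeg vp).
Qed.

Lemma squarefree_llcm s t h : valid s -> valid t ->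
  squarefree sigma s -> squarefree sigma t -> is_llcm s t h -> squarefree sigma h.
Proof.
move=> vs vt ss st [dsh dth min_h].
have [m' [lsm' ltm' _] sm'] := exists_squarefree_rlcm sigmaYB' sigma_invol' sigma_nondeg'
  (valid_rev_path vs) (valid_rev_path vt)
  (etrans (rdiv_ptgt sigmaYB dsh) (esym (rdiv_ptgt sigmaYB dth)))
  (etrans (squarefree_rev_path vs) ss) (etrans (squarefree_rev_path vt) st).
have /(ldiv_rev_path sigmaYB') := lsm'; rewrite dual_sigmaK rev_pathK // => dsm.
have /(ldiv_rev_path sigmaYB') := ltm'; rewrite dual_sigmaK rev_pathK // => dtm.
have [vh vm [f [vf fh E]]] := min_h _ dsm dtm.
have: squarefree sigma (rev_path src m').
  by rewrite -squarefree_rev_path // rev_pathK //; case: lsm'.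
rewrite /squarefree -(perm_uniq (perm_pi_eqv sigmaYB sigma_invol E _)).
  by rewrite pi_cat cat_uniq => /and3P[_ _ /map_uniq].
exact: valid_comp.
Qed.

Definition llcm_complement (s t u : qpath) : Prop :=
  [/\ ptgt u = psrc t, sharp u & is_llcm s t (comp u t)].

Lemma exists_llcm_complement s t : sharp s -> sharp t -> has_llcm src tgt sigma s t ->
  exists u, forall s' t', eqv s s' -> eqv t t' -> llcm_complement s' t' u.
Proof.
move=> /sharpE[vs ss].
move=> /sharpE[vt st] [h lcm_h].
have [[_ vh _] [_ _ [u [vu ut E]]] _] := lcm_h.
have su : squarefree sigma u.
  have := squarefree_llcm vs vt ss st lcm_h.
  rewrite /squarefree -(perm_uniq (perm_pi_eqv sigmaYB sigma_invol E (valid_comp vu vt _))) //.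
  by rewrite pi_cat cat_uniq => /andP[].
exists u => s' t' Es Et; split.
- by rewrite ut (eqv_psrc Et).
- exact/sharpE.
- by apply: (is_llcm_eqv sigmaYB Es Et _ lcm_h); apply: eqv_trans (eqv_sym E) (eqv_compl u Et).
Qed.

Definition theta_of_classes (Cs Ct : qpath -> Prop) : option (seq qpath) :=
  match boolp.pselect (exists u, forall s t, Cs s -> Ct t -> llcm_complement s t u) with
  | left ex_u => Some [:: proj1_sig (boolp.cid ex_u)]
  | right _ => None
  end.

(* Reading [s] and [t] only through their classes makes [theta] well defined on C(sigma). *)
Definition theta (s t : qpath) : option (seq qpath) := theta_of_classes (eqv s) (eqv t).

Lemma theta_eqv s t s' t' : eqv s s' -> eqv t t' -> theta s t = theta s' t'.
Proof.
have class_eq p p' : eqv p p' -> eqv p = eqv p'.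
  move=> E; apply: boolp.funext => q; apply: boolp.propext.
  by split; [apply: eqv_trans (eqv_sym E) | apply: eqv_trans E].
by move=> /class_eq Es /class_eq Et; rewrite /theta Es Et.
Qed.

Lemma thetaP s t ss : theta s t = Some ss -> exists u, ss = [:: u] /\ llcm_complement s t u.
Proof.
rewrite /theta /theta_of_classes; case: boolp.pselect => // ex_u [<-].
by case: boolp.cid => u Pu; exists u; split=> //; apply: Pu; apply: eqv_refl.
Qed.

Lemma theta_has_llcm s t :
  sharp s -> sharp t -> theta s t <> None <-> has_llcm src tgt sigma s t.
Proof.
move=> Ss St; split=> [|/(exists_llcm_complement Ss St) ex_u].
  by case E: (theta s t) => [ss|] // _; have [u [_ [_ _ lcm]]] := thetaP E; exists (comp u t).
by rewrite /theta /theta_of_classes; case: boolp.pselect.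
Qed.

Theorem rlcm_closure_perfect : perfect src tgt sigma S.
Proof.
exists theta; split.
- split=> [s t s' t' _ _ _ _ Es Et | | s t ss uu _ _].
  + by rewrite (theta_eqv Es Et); apply: opt_seq_eqv_refl.
  + exact: theta_has_llcm.
  move=> /thetaP[u [-> [ut [vu su] lcm]]] /thetaP[u' [-> [u's [vu' su'] lcm']]].
  rewrite !lmul1; split; try by [exists (psrc u) | exists (psrc u') | move=> x [<-|]].
  by split=> //; apply: eqv_llcm lcm (is_llcm_sym lcm').
- by move=> s t ss _ _ /thetaP[u [-> _]].
move=> s t ss Ss St _ /thetaP[u [-> [_ _ lcm]]]; rewrite lmul1.
move: Ss St => /sharpE[vs ss'].
move=> /sharpE[vt st].
apply/sharpE; split.
  by case: lcm => [[]].
exact: squarefree_llcm lcm.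
Qed.

End Perfect.

Theorem corollary5p12 (V A : Type) (src tgt : A -> V)
    (sigma : A -> A -> A * A) :
  qYB_map src tgt sigma ->
  involutive_qYB src tgt sigma ->
  nondegenerate_qYB src tgt sigma ->
  Garside src tgt sigma (rlcm_closure src tgt sigma) /\
  perfect src tgt sigma (rlcm_closure src tgt sigma).
Proof.
move=> sigmaYB sigma_invol sigma_nondeg.
(* Counting multiplicities in [pi] needs decidable equality of arrows, available classically. *)
pose A_eq : eqType := HB.pack_for eqType A (boolp.gen_eqMixin A).
split; [exact: (@rlcm_closure_Garside V A_eq) | exact: (@rlcm_closure_perfect V A_eq)].
Qed.
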